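(* Let $T$ be a tree of order at least $6$ in which the set $S'(T)$ of weak support vertices is a maximum $2$-packing. Then $d_T(x,S'(T)\setminus\{x\})=3$ for every $x\in S'(T)$.
   Context: A weak support vertex is a vertex adjacent to exactly one leaf. A $2$-packing is a set of vertices pairwise at distance at least $3$; a maximum $2$-packing is one of maximum cardinality. $d_T(x,Y)=\min_{y\in Y}d_T(x,y)$. *)

(* finite simple graphs as symmetric irreflexive relations on a finType. *)
From mathcomp Require Import all_boot.
Set Implicit Arguments. Unset Strict Implicit. Unset Printing Implicit Defensive.

Section Graphs.
Variables (T : finType) (e : rel T).

Definition simple_graph : Prop := symmetric e /\ irreflexive e.

Definition connected_graph : Prop := forall x y : T, connect e x y.

Definition acyclic_graph : Prop :=
  forall (x : T) (p : seq T),
    path e x p -> uniq (x :: p) -> 2 <= size p -> ~~ e (last x p) x.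

Definition is_tree : Prop := [/\ simple_graph, connected_graph & acyclic_graph].

Definition nbhd (x : T) : {set T} := [set y | e x y].
Definition leaf (x : T) : bool := #|nbhd x| == 1.

Definition weak_support (x : T) : bool := #|[set y in nbhd x | leaf y]| == 1.
Definition weak_supports : {set T} := [set x | weak_support x].

Fixpoint ball (n : nat) (x : T) : {set T} :=
  match n with
  | 0 => [set x]
  | n'.+1 => ball n' x :|: [set y | [exists z in ball n' x, e z y]]
  end.

(* graph distance: least n with y within n steps of x
   (capped at #|T|, never reached in a connected graph) *)
Definition dist (x y : T) : nat :=
  \big[minn/#|T|]_(n < #|T| | y \in ball n x) n.

Definition dist_set (x : T) (Y : {set T}) : nat :=
  \big[minn/#|T|]_(y in Y) dist x y.

Definition packing2 (S : {set T}) : Prop :=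
  forall x y, x \in S -> y \in S -> x != y -> 3 <= dist x y.

Definition max_packing2 (S : {set T}) : Prop :=
  packing2 S /\ forall P : {set T}, packing2 P -> #|P| <= #|S|.

End Graphs.

From mathcomp Require Import all_boot.
Set Implicit Arguments. Unset Strict Implicit. Unset Printing Implicit Defensive.

(* A maximum 2-packing S all of whose members are support vertices dominates
   the graph: if no element of S were within distance 1 of a vertex z, then
   moving every element of S lying within distance 2 of z to one of its leaves
   and adding z would give a larger 2-packing.
   Now let x be in S. Since the tree has more than two vertices and x is
   adjacent to exactly one leaf, x has a non-leaf neighbour y, and y has a
   neighbour z other than x; z is not adjacent to x as a tree has no
   triangles. The element of S dominating z is at distance at most 3 from x
   and differs from x, while the packing property bounds all distances within
   S from below by 3. *)

Lemma bigmin_le (I : finType) (P : pred I) (F : I -> nat) m i :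
  P i -> \big[minn/m]_(j | P j) F j <= F i.
Proof.
move=> Pi; have : i \in index_enum I by rewrite mem_index_enum.
elim: (index_enum I) => [|j r IHr] //; rewrite inE big_cons => /predU1P [<-|ri].
  by rewrite Pi geq_minl.
by case: ifP => _; [apply: leq_trans (geq_minr _ _) (IHr ri) | apply: IHr].
Qed.

Lemma bigmin_ge (I : finType) (P : pred I) (F : I -> nat) m n :
  n <= m -> (forall i, P i -> n <= F i) -> n <= \big[minn/m]_(i | P i) F i.
Proof.
move=> le_nm le_nF; apply: (big_ind (fun v => n <= v)) => // a b.
by rewrite leq_min => -> ->.
Qed.

Section SymmetricGraph.
Variables (T : finType) (e : rel T).

Lemma ball0 x y : (y \in ball e 0 x) = (y == x).
Proof. by rewrite inE. Qed.

Lemma ballS n x y :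
  (y \in ball e n.+1 x) = (y \in ball e n x) || [exists z in ball e n x, e z y].
Proof. by rewrite /= !inE. Qed.

Lemma ball_mono m n x y : m <= n -> y \in ball e m x -> y \in ball e n x.
Proof.
elim: n => [|n IHn]; first by rewrite leqn0 => /eqP ->.
rewrite leq_eqVlt => /predU1P [-> //|lt_mn] y_m.
by rewrite ballS IHn.
Qed.

Lemma ball_last n x z y : z \in ball e n x -> e z y -> y \in ball e n.+1 x.
Proof. by move=> zx zy; rewrite ballS; apply/orP; right; apply/exists_inP; exists z. Qed.

Lemma ball1 x y : (y \in ball e 1 x) = (y == x) || e x y.
Proof.
rewrite ballS ball0; congr (_ || _); apply/exists_inP/idP => [[z]|xy].
  by rewrite ball0 => /eqP ->.
by exists x; rewrite ?ball0.
Qed.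

Lemma ball_trans m n x y w :
  y \in ball e m x -> w \in ball e n y -> w \in ball e (m + n) x.
Proof.
move=> yx; elim: n w => [|n IHn] w; first by rewrite ball0 addn0 => /eqP ->.
rewrite ballS addnS => /orP [w_n|/exists_inP [z zy zw]].
  by apply: ball_mono (IHn _ w_n).
exact: ball_last (IHn _ zy) zw.
Qed.

Lemma ball_first n x y :
  y \in ball e n.+1 x -> y = x \/ exists2 z, e x z & y \in ball e n z.
Proof.
elim: n y => [|n IHn] y.
  by rewrite ball1 => /predU1P [->|xy]; [left | right; exists y; rewrite ?ball0].
rewrite ballS => /orP [/IHn [->|[z xz yz]]|/exists_inP [w /IHn wx wy]].
- by left.
- by right; exists z; rewrite // (ball_mono _ yz).
case: wx => [wx|[z xz wz]]; right; last by exists z; rewrite // (ball_last wz wy).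
by exists y; [rewrite -wx | rewrite (@ball_mono 0) ?ball0].
Qed.

Lemma dist_gt n x y : n < #|T| -> (n < dist e x y) = (y \notin ball e n x).
Proof.
move=> lt_nT; rewrite /dist; have [yn|yNn] := boolP (y \in ball e n x).
  apply/negbTE; rewrite -leqNgt.
  exact: (bigmin_le (fun i : 'I_#|T| => nat_of_ord i) _ (i := Ordinal lt_nT)).
apply: bigmin_ge => // i y_i; rewrite ltnNge; apply: contra yNn => le_in.
exact: ball_mono y_i.
Qed.

Lemma dist_set_le x (Y : {set T}) y : y \in Y -> dist_set e x Y <= dist e x y.
Proof. exact: bigmin_le. Qed.

Lemma dist_set_ge x (Y : {set T}) n :
  n <= #|T| -> {in Y, forall y, n <= dist e x y} -> n <= dist_set e x Y.
Proof. exact: bigmin_ge. Qed.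

Lemma leaf_nbr_uniq l a b : leaf e l -> e l a -> e l b -> a = b.
Proof.
move=> /cards1P [c lc] la lb.
have : a \in nbhd e l by rewrite inE.
have : b \in nbhd e l by rewrite inE.
by rewrite lc !inE => /eqP -> /eqP ->.
Qed.

Lemma leaf_ball_succ n l s y :
  leaf e l -> e l s -> y \in ball e n.+1 l -> y = l \/ y \in ball e n s.
Proof.
move=> leaf_l ls /ball_first [->|[z lz yz]]; first by left.
by right; rewrite (leaf_nbr_uniq leaf_l ls lz).
Qed.

Lemma weak_support_leaf_uniq x a b :
  weak_support e x -> e x a -> leaf e a -> e x b -> leaf e b -> a = b.
Proof.
move=> /cards1P [c xc] xa leaf_a xb leaf_b.
have : a \in [set y in nbhd e x | leaf e y] by rewrite !inE xa.
have : b \in [set y in nbhd e x | leaf e y] by rewrite !inE xb.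
by rewrite xc !inE => /eqP -> /eqP ->.
Qed.

Lemma nonleaf_other_nbr y x : e y x -> ~~ leaf e y -> exists2 z, e y z & z != x.
Proof.
move=> yx Nleaf_y.
case: (pickP [pred z | e y z && (z != x)]) => [z /andP [yz zx]|none]; first by exists z.
case/negP: Nleaf_y; rewrite /leaf eqn_leq.
have /subset_leq_card : nbhd e y \subset [set x].
  by apply/subsetP => z; rewrite !inE => yz; move: (none z); rewrite /= yz => /negbFE.
rewrite cards1 => -> /=; apply/card_gt0P; exists x; by rewrite inE.
Qed.

Lemma acyclic_triangle_free x y z :
  irreflexive e -> acyclic_graph e -> e x y -> e y z -> z != x -> ~~ e z x.
Proof.
move=> irr acyc xy yz zx.
have xNy : x != y by apply: contraTneq xy => ->; rewrite irr.
have yNz : y != z by apply: contraTneq yz => ->; rewrite irr.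
apply: (acyc x [:: y; z]) => //=; first by rewrite xy yz.
by rewrite !inE negb_or xNy eq_sym zx yNz.
Qed.

Definition support_vertex (s : T) : bool := [exists l, e s l && leaf e l].

Definition support_leaf (s : T) : T := odflt s [pick l | e s l && leaf e l].

Lemma weak_support_vertex s : weak_support e s -> support_vertex s.
Proof.
move=> /cards1P [l sl]; apply/existsP; exists l.
by move: (set11 l); rewrite -sl !inE.
Qed.

Lemma support_leafP s : support_vertex s -> e s (support_leaf s) && leaf e (support_leaf s).
Proof. by rewrite /support_leaf; case: pickP => [//|none] /existsP [l]; rewrite none. Qed.

Hypothesis sym : symmetric e.

Lemma ball_sym n x y : (y \in ball e n x) = (x \in ball e n y).
Proof.
suff ball_symW m u v : v \in ball e m u -> u \in ball e m v by apply/idP/idP; apply: ball_symW.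
elim: m u v => [|m IHm] u v; first by rewrite !ball0 eq_sym.
rewrite ballS => /orP [/IHm vu|/exists_inP [w wu wv]]; first by rewrite ballS vu.
have vw : w \in ball e 1 v by rewrite ball1 sym wv orbT.
by have := ball_trans vw (IHm _ _ wu).
Qed.

Lemma leaf_nbr_other_nbr x l :
  connected_graph e -> 2 < #|T| -> leaf e l -> e x l -> exists2 y, e x y & y != l.
Proof.
move=> conn T3 leaf_l xl.
case: (pickP [pred y | e x y && (y != l)]) => [y /andP [xy yl]|none]; first by exists y.
suff : #|T| <= 2 by rewrite leqNgt T3.
have xNbr y : e x y -> y = l.
  by move=> xy; move: (none y); rewrite /= xy => /negbFE/eqP.
have closed_xl p a : a \in [set x; l] -> path e a p -> last a p \in [set x; l].
  elim: p a => [|b p IHp] a //= xla /andP [ab bp]; apply: IHp bp.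
  move: xla ab; rewrite !inE => /orP [] /eqP -> ab.
    by rewrite (xNbr _ ab) eqxx orbT.
  have lx : e l x by rewrite sym.
  by rewrite (leaf_nbr_uniq leaf_l ab lx) eqxx.
have /subset_leq_card : [set: T] \subset [set x; l].
  apply/subsetP => v _; have /connectP [p xp ->] := conn x v.
  by apply: closed_xl xp; rewrite !inE eqxx.
by rewrite cardsT cards2 => /leq_trans; apply; case: (x != l).
Qed.

Lemma weak_support_vertex_at_dist2 x :
  irreflexive e -> connected_graph e -> acyclic_graph e -> 2 < #|T| ->
  weak_support e x -> exists2 z, z \in ball e 2 x & z \notin ball e 1 x.
Proof.
move=> irr conn acyc T3 wsx.
have /andP [xl leaf_l] := support_leafP (weak_support_vertex wsx).
have [y xy yNl] := leaf_nbr_other_nbr conn T3 leaf_l xl.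
have yNleaf : ~~ leaf e y.
  by apply: contraNN yNl => leaf_y; rewrite (weak_support_leaf_uniq wsx xy leaf_y xl).
have yx : e y x by rewrite sym.
have [z yz zNx] := nonleaf_other_nbr yx yNleaf.
exists z; first by apply: ball_last yz; rewrite ball1 xy orbT.
by rewrite ball1 negb_or zNx sym (acyclic_triangle_free irr acyc xy yz zNx).
Qed.

Definition far (x y : T) : bool := y \notin ball e 2 x.

Lemma far_sym x y : far x y = far y x.
Proof. by rewrite /far ball_sym. Qed.

Lemma far_leaf u v l : leaf e l -> e l u -> far u v -> far l v.
Proof.
move=> leaf_l lu; apply: contra => /(leaf_ball_succ leaf_l lu) [->|vu].
  by rewrite ball_sym (@ball_mono 1) // ball1 lu orbT.
exact: ball_mono vu.
Qed.

Lemma packing2_far P :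
  2 < #|T| -> packing2 e P <-> {in P &, forall x y, x != y -> far x y}.
Proof.
move=> T3; split=> packP x y xP yP xy; first by rewrite /far -dist_gt ?packP.
by rewrite dist_gt //; apply: packP.
Qed.

Section MaximumPacking.
Variable S : {set T}.
Hypotheses (T3 : 2 < #|T|) (maxS : max_packing2 e S).
Hypothesis suppS : {in S, forall s, support_vertex s}.

Definition leaf_shift (z s : T) : T := if s \in ball e 2 z then support_leaf s else s.

Lemma leaf_shift_spec z s :
  s \in S -> leaf_shift z s = s \/ e (leaf_shift z s) s && leaf e (leaf_shift z s).
Proof.
move=> Ss; rewrite /leaf_shift; case: ifP => _; [right | by left].
by have /andP [sl ->] := support_leafP (suppS Ss); rewrite sym sl.
Qed.

Lemma far_leaf_shift z s t : s \in S -> t \in S -> s != t ->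
  far (leaf_shift z s) (leaf_shift z t).
Proof.
move=> Ss St st; have farS := (packing2_far S T3).1 maxS.1.
have far_s_shift : far s (leaf_shift z t).
  case: (leaf_shift_spec z St) => [->|/andP [ts leaf_t]]; first exact: farS.
  by rewrite far_sym (far_leaf leaf_t ts) // far_sym farS // eq_sym.
by case: (leaf_shift_spec z Ss) => [->|/andP [ss leaf_s]] //; apply: far_leaf ss _.
Qed.

Lemma far_center_leaf_shift z s :
  {in S, forall t, t \notin ball e 1 z} -> s \in S -> far z (leaf_shift z s).
Proof.
move=> undom Ss; rewrite /leaf_shift; case: ifPn => [_|//].
have /andP [sl leaf_l] := support_leafP (suppS Ss).
have ls : e (support_leaf s) s by rewrite sym.
rewrite far_sym /far; apply: contra (undom _ Ss).
case/(leaf_ball_succ leaf_l ls) => [zl|]; last by rewrite ball_sym.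
by rewrite zl ball1 ls orbT.
Qed.

Lemma max_packing2_dominating z : exists2 s, s \in S & s \in ball e 1 z.
Proof.
apply/exists_inP; apply: contraT => /exists_inPn undom.
pose P := z |: [set leaf_shift z s | s in S].
have far_refl x : ~~ far x x by rewrite negbK (@ball_mono 0) ?ball0.
have shift_inj : {in S &, injective (leaf_shift z)}.
  move=> s t Ss St; apply: contra_eq => st.
  by apply: contraTneq (far_leaf_shift z Ss St st) => ->.
have zNshift : z \notin [set leaf_shift z s | s in S].
  apply/imsetP => [[s Ss zs]].
  by move: (far_center_leaf_shift undom Ss); rewrite -zs (negbTE (far_refl z)).
have packP : packing2 e P.
  apply/packing2_far => // a b; rewrite !inE.
  move=> /predU1P [->|/imsetP [s Ss ->]] /predU1P [->|/imsetP [t St ->]] ab.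
  - by rewrite eqxx in ab.
  - exact: far_center_leaf_shift.
  - by rewrite far_sym far_center_leaf_shift.
  - by apply: far_leaf_shift => //; move: ab; apply: contra_neq => ->.
have := maxS.2 _ packP.
by rewrite cardsU1 zNshift card_in_imset // ltnn.
Qed.

End MaximumPacking.
End SymmetricGraph.

Theorem claim2 (T : finType) (e : rel T) :
  is_tree e -> 6 <= #|T| ->
  max_packing2 e (weak_supports e) ->
  forall x, x \in weak_supports e ->
    dist_set e x (weak_supports e :\ x) = 3.
Proof.
move=> [[sym irr] conn acyc] T6 maxS x Sx.
have T3 : 2 < #|T| by apply: leq_trans T6.
have wsx : weak_support e x by rewrite inE in Sx.
have [z zx2 zNx1] := weak_support_vertex_at_dist2 sym irr conn acyc T3 wsx.
have suppS : {in weak_supports e, forall s, support_vertex e s}.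
  by move=> s; rewrite inE; apply: weak_support_vertex.
have [s Ss sz] := max_packing2_dominating sym T3 maxS suppS z.
have sx3 : s \in ball e 3 x by apply: ball_trans zx2 sz.
have sNx : s != x by apply: contraNneq zNx1 => sx; rewrite (ball_sym sym) -sx.
apply/eqP; rewrite eqn_leq; apply/andP; split.
  have Sx's : s \in weak_supports e :\ x by rewrite in_setD1 sNx.
  apply: leq_trans (dist_set_le e x Sx's) _.
  by rewrite leqNgt dist_gt ?sx3 // (leq_trans _ T6).
apply: dist_set_ge => [|w]; first exact: leq_trans T6.
by rewrite in_setD1 => /andP [wNx Sw]; apply: maxS.1; rewrite // eq_sym.
Qed.
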